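(* Let $\mathcal{H}$ be a finite family of rooted digraphs. Let $D$ be a digraph, $k$ an integer, $W$ an $\mathcal{H}$-deletion set of $D$ with $|W|\le k+1$, $\mathcal{S}=(S_1,\dots,S_q)$ an ordered partition of $W$, and let $X$ be a solution for $(D,\mathcal{S},W,k)$. If $u\in V(D)$ lies in ${\sf F\textrm{-}Shadow}(X)$ (respectively ${\sf R\textrm{-}Shadow}(X)$), then there is a solution for $(D,\mathcal{S},W,k)$ that contains an important $\{u\}$-$W$ separator in $D$ (respectively an important $\{u\}$-$W$ separator in $D^{rev}$).
   Context: Subgraphs are not necessarily induced; strong components are maximal sets of mutually reachable vertices. A digraph is rooted if some vertex reaches all its vertices. $X$ is an $\mathcal{H}$-deletion set of $D$ if no strong component of $D-X$ contains a subgraph isomorphic to a graph in $\mathcal{H}$. A solution for $(D,\mathcal{S},W,k)$ is a set $X\subseteq V(D)$ with $|X|\le k$, $X\cap W=\emptyset$, $X$ an $\mathcal{H}$-deletion set, and $X$ intersecting every directed $S_i$-$S_j$ path for all $i<j$. For $X\subseteq V(D)\setminus W$, ${\sf F\textrm{-}Shadow}(X)$ is the set of vertices $u\notin X$ such that $D-X$ has no directed path from $u$ to $W$, and ${\sf R\textrm{-}Shadow}(X)$ is the set of $u\notin X$ such that $D-X$ has no directed path from $W$ to $u$. $D^{rev}$ is $D$ with all arcs reversed. For disjoint $A,B$, an $A$-$B$ separator is a set $C$ disjoint from $A\cup B$ with no $A$-$B$ path in $D-C$; $R_D(A,C)$ is the set of vertices reachable from $A$ in $D-C$; $C'$ covers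 $C$ if $R_D(A,C')\supseteq R_D(A,C)$. An $A$-$B$ separator $C$ is important if there is no $A$-$B$ separator $C'\neq C$ with $|C'|\le|C|$ that covers $C$. *)

From mathcomp Require Import all_boot.
From Stdlib Require List.
Set Implicit Arguments. Unset Strict Implicit. Unset Printing Implicit Defensive.

Record digraph := Digraph { dvert : finType; darc : rel dvert }.

Section Digraphs.
Variable V : finType.
Implicit Types (E : rel V) (X A B C W : {set V}).

Definition rev_rel E : rel V := fun x y => E y x.

Definition del_rel E X : rel V :=
  fun x y => [&& x \notin X, y \notin X & E x y].

Definition reach_in E X u v : bool :=
  (u \notin X) && connect (del_rel E X) u v.

Definition strong_component E X C : Prop :=
  [/\ C != set0, C \subset ~: X,
      (forall x y, x \in C -> y \in C -> reach_in E X x y) &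
      (forall C' : {set V}, C \subset C' -> C' \subset ~: X ->
         (forall x y, x \in C' -> y \in C' -> reach_in E X x y) -> C' = C)].

(* the digraph restricted to C (D[C] with arcs of D) contains a
   (not necessarily induced) subgraph isomorphic to H *)
Definition contains_sub E C (H : digraph) : Prop :=
  exists f : dvert H -> V,
    [/\ injective f, (forall x, f x \in C) &
        (forall x y, @darc H x y -> E (f x) (f y))].

Definition deletion_set (Hs : seq digraph) E X : Prop :=
  forall C, strong_component E X C ->
  forall H, Stdlib.Lists.List.In H Hs -> ~ contains_sub E C H.

Definition hits_all_paths E X A B : Prop :=
  forall x p, x \in A -> path E x p -> last x p \in B -> has (mem X) (x :: p).

Definition ordered_partition (S : seq {set V}) (W : {set V}) : Prop :=
  [/\ all (fun A => A != set0) S,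
      (forall i j, i < j < size S -> [disjoint nth set0 S i & nth set0 S j]) &
      \bigcup_(A <- S) A = W].

Definition solution (Hs : seq digraph) E (S : seq {set V}) (W : {set V}) (k : nat)
  X : Prop :=
  [/\ #|X| <= k, [disjoint X & W], deletion_set Hs E X &
      forall i j, i < j < size S ->
        hits_all_paths E X (nth set0 S i) (nth set0 S j)].

Definition F_shadow E W X : {set V} :=
  [set u | (u \notin X) && [forall w in W, ~~ reach_in E X u w]].

Definition R_shadow E W X : {set V} :=
  [set u | (u \notin X) && [forall w in W, ~~ reach_in E X w u]].

Definition separator E A B C : Prop :=
  [disjoint C & A :|: B] /\
  (forall a b, a \in A -> b \in B -> ~~ reach_in E C a b).

Definition reach_set E A C : {set V} :=
  [set v | [exists a in A, reach_in E C a v]].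

Definition covers E A C' C : Prop := reach_set E A C \subset reach_set E A C'.

Definition important_separator E A B C : Prop :=
  separator E A B C /\
  ~ (exists C' : {set V}, [/\ separator E A B C', C' != C, #|C'| <= #|C| &
                             covers E A C' C]).

Definition rooted (H : digraph) : Prop :=
  exists r : dvert H, forall v, connect (@darc H) r v.

End Digraphs.

From mathcomp Require Import all_boot zify.
Set Implicit Arguments. Unset Strict Implicit. Unset Printing Implicit Defensive.

(* If u lies in the forward shadow of X, then X separates u from W, and so
   does the part Z of X entered by an arc from the region reachable from u.
   Z can be traded for an important u-W separator C with |C| <= |Z| whose
   region contains that of Z; every vertex of Z \ C is then reachable from u
   in D - C, so in D - Y, where Y = (X \ Z) ∪ C, no vertex of X reaches W.
   This alone makes Y a solution: a strong component of D - Y meeting both X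
   and W would let a vertex of X reach W, so each strong component avoids X
   or W and is H-free because both are deletion sets; and an S_i-S_j path
   avoiding Y passes through a vertex of X and then reaches S_j, a part of W.
   The reverse shadow is the same argument in the reverse digraph. *)

Section Reachability.
Variable V : finType.
Implicit Types (E : rel V) (A B R X Y Z : {set V}).

Lemma path_del_rel E Z a p :
  (a \notin Z) && path (del_rel E Z) a p = path E a p && ~~ has (mem Z) (a :: p).
Proof.
elim: p a => [|b p IH] a /=; first by rewrite orbF andbT.
have := IH b; rewrite /= /del_rel.
by case: (a \in Z); case: (b \in Z); rewrite /= ?andbF // => ->; rewrite andbA.
Qed.

Lemma reach_inP E Z a b :
  reflect (exists2 p, path E a p && ~~ has (mem Z) (a :: p) & last a p = b)
          (reach_in E Z a b).
Proof.
apply: (iffP andP) => [[aZ /connectP[p pP ->]] | [p]].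
  by exists p; rewrite // -path_del_rel aZ.
by rewrite -path_del_rel => /andP[aZ pP] <-; split=> //; apply/connectP; exists p.
Qed.

Lemma reach_in_end E Z a b : reach_in E Z a b -> b \notin Z.
Proof.
case/reach_inP=> p /andP[_ /hasPn pZ] <-; exact/pZ/mem_last.
Qed.

Lemma reach_in_refl E Z a : a \notin Z -> reach_in E Z a a.
Proof. by move=> aZ; rewrite /reach_in aZ connect0. Qed.

Lemma reach_in_trans E Z a b c :
  reach_in E Z a b -> reach_in E Z b c -> reach_in E Z a c.
Proof. by case/andP=> aZ ab /andP[_ bc]; rewrite /reach_in aZ (connect_trans ab bc). Qed.

Lemma reach_in_step E Z a b c :
  reach_in E Z a b -> c \notin Z -> E b c -> reach_in E Z a c.
Proof.
move=> ab cZ bc; apply: (reach_in_trans ab).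
by rewrite /reach_in (reach_in_end ab) connect1 // /del_rel (reach_in_end ab) cZ.
Qed.

Lemma reach_in_subset E Z1 Z2 a b :
  Z1 \subset Z2 -> reach_in E Z2 a b -> reach_in E Z1 a b.
Proof.
move=> /subsetP Z12 /reach_inP[p /andP[pE /hasPn pZ] <-].
apply/reach_inP; exists p => //; rewrite pE; apply/hasPn => z /pZ.
by apply: contra => /Z12.
Qed.

Lemma reach_in_mem_path E Z a p z :
  path E a p -> ~~ has (mem Z) (a :: p) -> z \in a :: p ->
  reach_in E Z a z && reach_in E Z z (last a p).
Proof.
move=> pE pZ zp; case/splitPl: zp pE pZ => p1 p2 <-.
rewrite cat_path last_cat -cat_cons has_cat negb_or => /andP[pE1 pE2] /andP[pZ1 pZ2].
have zZ : last a p1 \notin Z by apply: (hasPn pZ1); apply: mem_last.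
apply/andP; split; apply/reach_inP; first by exists p1; rewrite ?pE1.
by exists p2; rewrite // pE2 /= (negPf zZ).
Qed.

Lemma reach_in_split E X Y a b :
  reach_in E Y a b -> ~~ reach_in E X a b ->
  exists2 v, v \in X & reach_in E Y a v && reach_in E Y v b.
Proof.
case/reach_inP=> p /andP[pE pY] <- abX.
have /hasP[v vp vX] : has (mem X) (a :: p).
  by apply: contraNT abX => pX; apply/reach_inP; exists p; rewrite ?pE.
by exists v; last exact: reach_in_mem_path.
Qed.

Lemma reach_in_closed E Y R a b :
  a \in R -> (forall r v, r \in R -> v \notin Y -> E r v -> v \in R) ->
  reach_in E Y a b -> b \in R.
Proof.
move=> aR closedR /andP[_ /connectP[p + ->]].
elim: p a aR => [|c p IH] a aR //= /andP[/and3P[_ cY ac]].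
exact/IH/(closedR a).
Qed.

Lemma connect_del_rel_notin E Z x y :
  connect (del_rel E Z) x y -> (x \notin Z) = (y \notin Z).
Proof.
case/connectP=> -[|c p] pZ -> //.
have xZ : x \notin Z by case/andP: pZ => /and3P[].
rewrite xZ (@reach_in_end E Z x) //; rewrite /reach_in xZ.
by apply/connectP; exists (c :: p).
Qed.

Lemma reach_in_rev E Z a b : reach_in (rev_rel E) Z a b = reach_in E Z b a.
Proof.
have revE : connect (del_rel (rev_rel E) Z) a b = connect (del_rel E Z) b a.
  have := connect_rev (del_rel E Z) a b; rewrite /= => <-.
  by apply: eq_connect => x y; rewrite /del_rel /rev_rel andbCA.
rewrite /reach_in revE; case ba: (connect _ b a); rewrite ?andbF //.
by rewrite (connect_del_rel_notin ba).
Qed.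

Lemma hits_all_pathsP E X A B :
  hits_all_paths E X A B <->
  (forall a b, a \in A -> b \in B -> ~~ reach_in E X a b).
Proof.
split=> [hitX a b aA bB | sepX x p xA pE pB].
  by apply/reach_inP=> -[p /andP[pE pX] pb]; rewrite -pb in bB; case/negP: pX; apply: hitX.
by apply: contraR (sepX _ _ xA pB) => pX; apply/reach_inP; exists p; rewrite ?pE.
Qed.

Lemma hits_all_paths_transfer E X Y A B :
  hits_all_paths E X A B ->
  (forall a v b, a \in A -> v \in X -> b \in B ->
     ~~ (reach_in E Y a v && reach_in E Y v b)) ->
  hits_all_paths E Y A B.
Proof.
move=> /hits_all_pathsP sepX noXAB; apply/hits_all_pathsP => a b aA bB.
apply/negP => ab; have [v vX avb] := reach_in_split ab (sepX a b aA bB).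
by case/negP: (noXAB a v b aA vX bB).
Qed.

End Reachability.

Section StrongComponents.
Variable V : finType.
Implicit Types (E : rel V) (C K W X Y Z : {set V}).

Lemma strong_component_closed E Y K x y z :
  strong_component E Y K -> x \in K -> y \in K ->
  reach_in E Y x z -> reach_in E Y z y -> z \in K.
Proof.
case=> _ KY Kr Kmax xK yK xz zy.
suff <- : z |: K = K by rewrite setU11.
apply: Kmax; first exact: subsetUr.
  by rewrite subUset sub1set inE (reach_in_end xz).
move=> s t; rewrite !inE => /predU1P[-> | sK] /predU1P[-> | tK].
- exact/reach_in_refl/(reach_in_end xz).
- exact: reach_in_trans zy (Kr _ _ yK tK).
- exact: reach_in_trans (Kr _ _ sK xK) xz.
- exact: Kr.
Qed.

Lemma strong_component_reach_within E Y K x y :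
  strong_component E Y K -> x \in K -> y \in K -> reach_in E (~: K) x y.
Proof.
move=> HK xK yK; have [_ _ Kr _] := HK.
case/reach_inP: (Kr x y xK yK) => p /andP[pE pY] py.
apply/reach_inP; exists p => //; rewrite pE; apply/hasPn => z zp /=.
have /andP[xz zy] := reach_in_mem_path pE pY zp.
by rewrite inE negbK (strong_component_closed HK xK yK xz) -?py.
Qed.

Lemma strong_component_extend E Y Z K :
  strong_component E Y K -> K \subset ~: Z ->
  exists2 K', strong_component E Z K' & K \subset K'.
Proof.
move=> HK KZ; have [/set0Pn[x xK] _ _ _] := HK.
have Kr s t : s \in K -> t \in K -> reach_in E Z s t.
  move=> sK tK; apply: reach_in_subset (strong_component_reach_within HK sK tK).
  by rewrite subsetC.
exists [set y | reach_in E Z x y && reach_in E Z y x].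
  split.
  - by apply/set0Pn; exists x; rewrite inE !Kr.
  - by apply/subsetP => y; rewrite !inE => /andP[/reach_in_end].
  - by move=> s t; rewrite !inE => /andP[_ sx] /andP[xt _]; exact: reach_in_trans sx xt.
  - move=> K' sub K'Z K'r; apply/eqP; rewrite eqEsubset sub andbT.
    have xK' : x \in K' by apply: (subsetP sub); rewrite inE !Kr.
    by apply/subsetP => y yK'; rewrite inE !K'r.
by apply/subsetP => y yK; rewrite inE !Kr.
Qed.

Lemma contains_sub_subset E C C' (H : digraph) :
  C \subset C' -> contains_sub E C H -> contains_sub E C' H.
Proof. by move=> /subsetP CC' [f [f_inj fC fE]]; exists f; split=> // x; apply/CC'. Qed.

Lemma deletion_set_disjoint_component Hs E Z Y K H :
  deletion_set Hs E Z -> strong_component E Y K -> [disjoint K & Z] ->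
  Stdlib.Lists.List.In H Hs -> ~ contains_sub E K H.
Proof.
move=> HZ HK; rewrite disjoints_subset => /(strong_component_extend HK)[K' HK' KK'] HH.
by move=> /(contains_sub_subset KK'); apply: HZ HK' H HH.
Qed.

Lemma deletion_set_transfer Hs E X W Y :
  deletion_set Hs E X -> deletion_set Hs E W ->
  (forall v w, v \in X -> w \in W -> ~~ (reach_in E Y v w && reach_in E Y w v)) ->
  deletion_set Hs E Y.
Proof.
move=> HX HW noXW K HK H HH.
have [KX | [v /setIP[vK vX]]] := set_0Vmem (K :&: X).
  by apply: (deletion_set_disjoint_component HX HK _ HH); rewrite -setI_eq0 KX.
have [KW | [w /setIP[wK wW]]] := set_0Vmem (K :&: W).
  by apply: (deletion_set_disjoint_component HW HK _ HH); rewrite -setI_eq0 KW.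
have [_ _ Kr _] := HK.
by case/negP: (noXW v w vX wW); rewrite !Kr.
Qed.

End StrongComponents.

Lemma ordered_partition_part_sub (V : finType) (S : seq {set V}) W i :
  ordered_partition S W -> nth set0 S i \subset W.
Proof.
case=> _ _ <-; rewrite bigcup_seq.
have [iS | iS] := ltnP i (size S); first by rewrite bigcup_sup ?mem_nth.
by rewrite nth_default ?sub0set.
Qed.

Section SolutionTransfer.
Variables (Hs : seq digraph) (V : finType) (E : rel V) (S : seq {set V}).
Variables (W X Y : {set V}) (k : nat).
Hypotheses (HW : deletion_set Hs E W) (partS : ordered_partition S W).
Hypotheses (solX : solution Hs E S W k X) (Yk : #|Y| <= k) (YW : [disjoint Y & W]).

Lemma solution_transfer_out :
  (forall v w, v \in X -> w \in W -> ~~ reach_in E Y v w) -> solution Hs E S W k Y.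
Proof.
move=> noXW; have [_ _ HX hitX] := solX; split=> //.
  by apply: deletion_set_transfer HX HW _ => v w vX wW; rewrite negb_and noXW.
move=> i j ij; apply: hits_all_paths_transfer (hitX i j ij) _ => a v b _ vX bS.
by rewrite negb_and (noXW v b) ?orbT //; apply: (subsetP (ordered_partition_part_sub j partS)).
Qed.

Lemma solution_transfer_in :
  (forall v w, v \in X -> w \in W -> ~~ reach_in E Y w v) -> solution Hs E S W k Y.
Proof.
move=> noWX; have [_ _ HX hitX] := solX; split=> //.
  by apply: deletion_set_transfer HX HW _ => v w vX wW; rewrite negb_and (noWX v w) ?orbT.
move=> i j ij; apply: hits_all_paths_transfer (hitX i j ij) _ => a v b aS vX _.
by rewrite negb_and (noWX v a) //; apply: (subsetP (ordered_partition_part_sub i partS)).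
Qed.

End SolutionTransfer.

Section ImportantSeparators.
Variables (V : finType) (E : rel V) (A B : {set V}).
Implicit Types (C Z : {set V}).

Lemma reach_set1 Z u v : (v \in reach_set E [set u] Z) = reach_in E Z u v.
Proof.
rewrite inE; apply/exists_inP/idP => [[a /set1P-> //] | uv].
by exists u; rewrite ?set11.
Qed.

Lemma reach_set_subset Z1 Z2 : Z1 \subset Z2 -> reach_set E A Z2 \subset reach_set E A Z1.
Proof.
move=> Z12; apply/subsetP => v; rewrite !inE => /exists_inP[a aA av].
by apply/exists_inP; exists a; last exact: reach_in_subset av.
Qed.

Lemma reach_set_step Z r v :
  r \in reach_set E A Z -> v \notin Z -> E r v -> v \in reach_set E A Z.
Proof.
rewrite !inE => /exists_inP[a aA ar] vZ rv.
by apply/exists_inP; exists a; last exact: reach_in_step ar vZ rv.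
Qed.

Lemma reach_set_disjoint C : [disjoint reach_set E A C & C].
Proof.
rewrite disjoints_subset; apply/subsetP => v; rewrite !inE => /exists_inP[a _].
exact: reach_in_end.
Qed.

Lemma separatorP C :
  reflect (separator E A B C)
          ([disjoint C & A :|: B] && [disjoint reach_set E A C & B]).
Proof.
apply: (iffP andP) => -[dC sepC]; split=> //.
  move=> a b aA bB; apply: contraFN (disjointFl sepC bB) => ab.
  by rewrite inE; apply/exists_inP; exists a.
rewrite disjoints_subset; apply/subsetP => b; rewrite !inE => /exists_inP[a aA ab].
by apply: contraL ab; apply: sepC.
Qed.

Definition out_boundary Z := [set v in Z | [exists r in reach_set E A Z, E r v]].

Lemma out_boundary_sub Z : out_boundary Z \subset Z.
Proof. by apply/subsetP => v; rewrite inE => /andP[]. Qed.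

Lemma out_boundary_reach Z C v :
  v \in out_boundary Z -> v \notin C ->
  reach_set E A Z \subset reach_set E A C -> v \in reach_set E A C.
Proof.
rewrite inE => /andP[_ /exists_inP[r rZ rv]] vC /subsetP ZC.
exact: reach_set_step (ZC r rZ) vC rv.
Qed.

Lemma reach_set_out_boundary Z :
  [disjoint A & Z] -> reach_set E A (out_boundary Z) = reach_set E A Z.
Proof.
move=> AZ; apply/eqP; rewrite eqEsubset (reach_set_subset (out_boundary_sub Z)) andbT.
apply/subsetP => v; rewrite [v \in _]inE => /exists_inP[a aA av].
apply: reach_in_closed av => [|r w rZ wZ' rw].
  by rewrite inE; apply/exists_inP; exists a; rewrite ?reach_in_refl ?(disjointFr AZ aA).
have [wZ | wZ] := boolP (w \in Z); last exact: reach_set_step rZ wZ rw.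
by case/negP: wZ'; rewrite inE wZ; apply/exists_inP; exists r.
Qed.

Lemma separator_out_boundary Z : separator E A B Z -> separator E A B (out_boundary Z).
Proof.
move=> /separatorP/andP[dZ dR].
have AZ : [disjoint A & Z] by rewrite disjoint_sym (disjointWr (subsetUl A B) dZ).
apply/separatorP; rewrite reach_set_out_boundary // dR andbT.
exact: disjointWl (out_boundary_sub Z) dZ.
Qed.

Lemma important_separator_exists Z :
  separator E A B Z ->
  exists C, [/\ important_separator E A B C, #|C| <= #|Z| & covers E A C Z].
Proof.
move=> /separatorP sepZ.
pose cand C := [&& [disjoint C & A :|: B] && [disjoint reach_set E A C & B],
                   reach_set E A Z \subset reach_set E A C & #|C| <= #|Z|].
have candZ : cand Z by rewrite /cand sepZ subxx leqnn.
(* C maximises its region, then minimises its size; minimality puts every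
   vertex of C on the boundary of its region, which makes C important. *)
case: (arg_maxnP (fun C => #|reach_set E A C|) candZ) => Cm candCm maxCm.
pose best C := cand C && (#|reach_set E A C| == #|reach_set E A Cm|).
have bestCm : best Cm by rewrite /best candCm eqxx.
case: (arg_minnP (fun C => #|C|) bestCm) => C /andP[candC /eqP RC] minC.
case/and3P: (candC) => /separatorP sepC ZC CZ.
exists C; split=> //.
have boundaryC : out_boundary C = C.
  have AC : [disjoint A & C].
    by case/separatorP/andP: sepC => dC _; rewrite disjoint_sym (disjointWr (subsetUl A B) dC).
  have /separatorP sepBC := separator_out_boundary sepC.
  apply/eqP; rewrite eqEcard out_boundary_sub minC // /best /cand sepBC.
  rewrite reach_set_out_boundary // ZC RC eqxx !andbT.
  exact: leq_trans (subset_leq_card (out_boundary_sub C)) CZ.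
split=> // -[C' [sepC' C'C C'le cov]].
have candC' : cand C'.
  by rewrite /cand (subset_trans ZC cov) (leq_trans C'le CZ) !andbT; apply/separatorP.
have RC' : reach_set E A C' = reach_set E A C.
  by apply/esym/eqP; rewrite eqEcard cov RC /=; exact: maxCm.
case/negP: C'C; rewrite eq_sym eqEcard C'le andbT; apply/subsetP => c cC.
apply: contraT => cC'; have cbd : c \in out_boundary C by rewrite boundaryC.
have := out_boundary_reach cbd cC' cov.
by rewrite RC' => /(disjointFr (reach_set_disjoint C)); rewrite cC.
Qed.

End ImportantSeparators.

Lemma F_shadow_rev (V : finType) (E : rel V) (W X : {set V}) :
  F_shadow (rev_rel E) W X = R_shadow E W X.
Proof.
apply/setP => u; rewrite !inE; congr (_ && _).
by apply: eq_forallb => w; rewrite reach_in_rev.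
Qed.

Lemma F_shadow_push (V : finType) (E : rel V) (W X : {set V}) u :
  u \in F_shadow E W X -> [disjoint X & W] ->
  exists Y C : {set V},
    [/\ #|Y| <= #|X|, [disjoint Y & W], C \subset Y,
        important_separator E [set u] W C &
        forall v w, v \in X -> w \in W -> ~~ reach_in E Y v w].
Proof.
rewrite inE => /andP[uX /forall_inP noreach] XW.
have sepX : separator E [set u] W X.
  split=> [|a w /set1P-> wW]; last exact: noreach.
  by rewrite disjoint_sym disjoints_subset subUset -!disjoints_subset disjoints1 uX disjoint_sym.
set Z := out_boundary E [set u] X.
have ZX : Z \subset X := out_boundary_sub E [set u] X.
have [C [impC CZ covC]] := important_separator_exists (separator_out_boundary sepX).
have [[dC sepC] _] := impC.
have covX : covers E [set u] C X by rewrite /covers -reach_set_out_boundary ?disjoints1.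
exists (X :\: Z :|: C), C; split=> //; last 2 first.
- exact: subsetUr.
- move=> v w vX wW; apply/negP => vw.
  have : v \notin X :\: Z :|: C by case/andP: vw.
  rewrite in_setU in_setD vX andbT negb_or negbK => /andP[vZ vC].
  have uv : reach_in E C u v by rewrite -reach_set1; exact: out_boundary_reach vZ vC covX.
  case/negP: (sepC u w (set11 u) wW).
  exact: reach_in_trans uv (reach_in_subset (subsetUr _ C) vw).
- have := subset_leq_card ZX; move: CZ; rewrite -/Z cardsU cardsD (setIidPr ZX); lia.
- rewrite disjoints_subset subUset -!disjoints_subset (disjointWl (subsetDl X Z) XW).
  exact: disjointWr (subsetUr [set u] W) dC.
Qed.

Theorem lemma12 (Hs : seq digraph) (V : finType) (E : rel V) (k : nat)
    (W : {set V}) (S : seq {set V}) (X : {set V}) (u : V) :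
  (forall H, Stdlib.Lists.List.In H Hs -> rooted H) ->
  deletion_set Hs E W ->
  #|W| <= k.+1 ->
  ordered_partition S W ->
  solution Hs E S W k X ->
  (u \in F_shadow E W X ->
     exists Y C : {set V}, [/\ solution Hs E S W k Y, C \subset Y &
                     important_separator E [set u] W C]) /\
  (u \in R_shadow E W X ->
     exists Y C : {set V}, [/\ solution Hs E S W k Y, C \subset Y &
                     important_separator (rev_rel E) [set u] W C]).
Proof.
move=> _ HW _ partS solX; have [Xk XW _ _] := solX.
split=> [uF | uR].
  have [Y [C [YX YW CY impC noXW]]] := F_shadow_push uF XW.
  exists Y, C; split=> //.
  exact: solution_transfer_out HW partS solX (leq_trans YX Xk) YW noXW.
rewrite -F_shadow_rev in uR.
have [Y [C [YX YW CY impC noXW]]] := F_shadow_push uR XW.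
exists Y, C; split=> //.
apply: solution_transfer_in HW partS solX (leq_trans YX Xk) YW _ => v w vX wW.
by rewrite -reach_in_rev noXW.
Qed.
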